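(* Let $S$ be a numerical semigroup with $\mathrm{g}(S)=g\ge 1$ and $\mathrm{m}(S)=a$. Let $q=\lfloor g/a\rfloor$ and $r=g-aq$. Then $S$ is reflective if and only if $a\in\{2,3,\dots,g+1\}$, $a\nmid g$, and \[ S=\langle A\rangle \quad\text{for}\quad A=\{a,\ 2g+a-r\}\cup\{g+1,g+2,\dots,g+(a-1)\}. \]
   Context: A numerical semigroup is a submonoid $S$ of $(\mathbb{N}_0,+)$ with finite complement. Its set of gaps is $\mathrm{H}(S)=\mathbb{N}_0\setminus S$, its genus is $\mathrm{g}(S)=\#\mathrm{H}(S)$, its Frobenius number (when $\mathrm{g}(S)\ge1$) is $\mathrm{F}(S)=\max \mathrm{H}(S)$, and its multiplicity $\mathrm{m}(S)$ is the smallest positive element of $S$. For $A\subseteq\mathbb{N}_0$, $\langle A\rangle$ denotes the set of all finite $\mathbb{N}_0$-linear combinations of elements of $A$. A numerical semigroup $S$ of genus $g\ge1$ is called reflective if for every $z\in\{0,1,\dots,g-1\}$ exactly one of $z$ and $z+g$ belongs to $S$. *)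

From mathcomp Require Import all_boot.
Set Implicit Arguments. Unset Strict Implicit. Unset Printing Implicit Defensive.

Definition numerical_semigroup (S : pred nat) : Prop :=
  [/\ S 0,
      (forall x y, S x -> S y -> S (x + y)) &
      exists N, forall n, N <= n -> S n].

Definition has_genus (S : pred nat) (g : nat) : Prop :=
  exists N, (forall n, N <= n -> S n) /\ count (fun i => ~~ S i) (iota 0 N) = g.

Definition has_multiplicity (S : pred nat) (a : nat) : Prop :=
  [/\ 0 < a, S a & forall k, 0 < k < a -> ~~ S k].

Inductive generated (A : seq nat) : nat -> Prop :=
  | gen0 : generated A 0
  | genS : forall x n, x \in A -> generated A n -> generated A (x + n).

Definition reflective (S : pred nat) (g : nat) : Prop :=
  forall z, z < g -> (S z (+) S (z + g)).

From mathcomp Require Import all_boot zify.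
Set Implicit Arguments. Unset Strict Implicit. Unset Printing Implicit Defensive.

(* A reflective semigroup [S] of genus [g] and multiplicity [a] is determined by
   [g] and [a].  Below [g] it consists of the multiples of [a]: if [a <= n < g]
   were in [S] but [n - a] not, reflectivity would put [n - a + g], hence
   [n + g], in [S] together with [n].  On [[g, 2g)] it is the reflected
   complement, and pairing [z] with [z + g] shows that [[0, 2g)] already holds
   all [g] gaps.  Conversely this three-range set is reflective, is closed under
   adding each generator [a], [g + i] ([0 < i < a]), [2g + a - g mod a], and
   every element of it is a sum of generators. *)

Lemma generated_add A x y : generated A x -> generated A y -> generated A (x + y).
Proof.
elim=> [|z n Az _ IH] Ay; first by rewrite add0n.
by rewrite -addnA; apply: genS Az (IH Ay).
Qed.

Lemma generated_mem A x : x \in A -> generated A x.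
Proof. by move=> Ax; rewrite -[x]addn0; apply: genS Ax (gen0 _). Qed.

Lemma generated_muln A x k : x \in A -> generated A (x * k).
Proof.
move=> Ax; elim: k => [|k IH]; first by rewrite muln0; apply: gen0.
by rewrite mulnS; apply: generated_add (generated_mem Ax) IH.
Qed.

Definition reflective_shape (g a : nat) : pred nat := fun n =>
  if n < g then a %| n else if n < 2 * g then ~~ (a %| n - g) else true.

Lemma reflective_shape_lt g a n : n < g -> reflective_shape g a n = (a %| n).
Proof. by rewrite /reflective_shape => ->. Qed.

Lemma reflective_shape_mid g a n :
  g <= n < 2 * g -> reflective_shape g a n = ~~ (a %| n - g).
Proof. by rewrite /reflective_shape => /andP [/leq_gtF -> ->]. Qed.

Lemma reflective_shape_ge g a n : 2 * g <= n -> reflective_shape g a n.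
Proof.
by rewrite /reflective_shape => g2n; rewrite !ifN //; lia.
Qed.

Definition reflective_gens (g a : nat) : seq nat :=
  a :: (2 * g + a - g %% a) :: [seq g + i | i <- iota 1 (a - 1)].

Lemma reflective_shape_reflective g a z :
  z < g -> reflective_shape g a z (+) reflective_shape g a (z + g).
Proof.
move=> zg; rewrite reflective_shape_lt // reflective_shape_mid ?addnK; last by lia.
by case: (a %| z).
Qed.

Section ReflectiveGenerators.

Variables g a : nat.
Hypotheses (a_range : 2 <= a <= g.+1) (a_ndvd_g : ~~ (a %| g)).

Let A := reflective_gens g a.
Let T := reflective_shape g a.

Lemma mem_reflective_gens_mult : a \in A.
Proof. by rewrite inE eqxx. Qed.

Lemma mem_reflective_gens_shift i : 0 < i < a -> g + i \in A.
Proof.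
move=> ia; rewrite !inE; apply/orP; right; apply/orP; right.
by apply/mapP; exists i => //; rewrite mem_iota; lia.
Qed.

Lemma ndvdn_modn_range m : ~~ (a %| m) -> 0 < m %% a < a.
Proof. by rewrite /dvdn lt0n => ->; rewrite ltn_pmod //; lia. Qed.

Lemma generated_shift_ndvd m : ~~ (a %| m) -> generated A (g + m).
Proof.
move=> /ndvdn_modn_range mod_m; rewrite (divn_eq m a) [_ * a + _]addnC addnA mulnC.
apply: generated_add (generated_muln _ mem_reflective_gens_mult).
by apply: generated_mem; apply: mem_reflective_gens_shift.
Qed.

(* [2g] and [2g + 1] are [g + m] with [a] not dividing [m], except [2g + 1]
   when [a %| g + 1], which is then the generator [2g + a - g mod a]; larger
   [2g + d] are [(g + 1) + (g + d - 1)]. *)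
Lemma generated_2g_plus d : d < a -> generated A (2 * g + d).
Proof.
move=> da; case: d da => [|[|d]] da.
- by rewrite addn0 mul2n -addnn; apply: generated_shift_ndvd.
- have [g1_ndvd | g1_dvd] := boolP (~~ (a %| g.+1)).
    by rewrite mul2n -addnn -addnA addn1; apply: generated_shift_ndvd.
  apply: generated_mem; rewrite !inE; apply/orP; right; apply/orP; left.
  have g_mod := ndvdn_modn_range a_ndvd_g.
  move: g1_dvd; rewrite negbK -addn1 {1}(divn_eq g a) -addnA.
  by rewrite dvdn_addr ?dvdn_mull // => /dvdn_leq; lia.
- have -> : 2 * g + d.+2 = (g + 1) + (g + d.+1) by lia.
  by apply: generated_add; apply: generated_mem; apply: mem_reflective_gens_shift; lia.
Qed.

Lemma reflective_shape_generated n : T n -> generated A n.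
Proof.
have [ng | gn] := ltnP n g.
  rewrite /T reflective_shape_lt // => /divnK <-; rewrite mulnC.
  exact: generated_muln mem_reflective_gens_mult.
have [n2g | g2n _] := ltnP n (2 * g).
  rewrite /T reflective_shape_mid ?gn // => /generated_shift_ndvd.
  by rewrite subnKC.
rewrite -(subnKC g2n) (divn_eq (n - 2 * g) a) [_ * a + _]addnC addnA [_ %/ a * a]mulnC.
apply: generated_add (generated_muln _ mem_reflective_gens_mult).
by apply: generated_2g_plus; rewrite ltn_pmod //; lia.
Qed.

Lemma reflective_shape_addl x m : x \in A -> T m -> T (x + m).
Proof.
have T_top k : 2 * g <= k -> T k by exact: reflective_shape_ge.
rewrite !inE => /or3P [/eqP-> | /eqP-> | /mapP [i i_range ->]].
- case: (ltnP m g) => [mg | gm].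
    rewrite /T reflective_shape_lt // => am.
    case: (ltnP (a + m) g) => [amg | gam].
      by rewrite reflective_shape_lt ?dvdn_addr.
    case: (ltnP (a + m) (2 * g)) => [am2g | ]; last exact: T_top.
    by rewrite reflective_shape_mid ?gam // dvdn_subr ?dvdn_addr.
  case: (ltnP m (2 * g)) => [m2g | ]; last by move=> ? _; apply: T_top; lia.
  rewrite /T reflective_shape_mid ?gm // => amg.
  case: (ltnP (a + m) (2 * g)) => [am2g | ]; last by move=> ?; apply: T_top.
  by rewrite reflective_shape_mid ?am2g; [rewrite -addnBA // dvdn_addr | lia].
- by move=> _; apply: T_top; have := ndvdn_modn_range a_ndvd_g; lia.
- move: i_range; rewrite mem_iota => i_range.
  case: (ltnP m g) => [mg | gm]; last by move=> _; apply: T_top; lia.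
  rewrite /T reflective_shape_lt // => am.
  case: (ltnP (g + i + m) (2 * g)) => [gim2g | ]; last by move=> ?; apply: T_top.
  rewrite reflective_shape_mid ?gim2g; last by lia.
  by rewrite -addnA addKn dvdn_addl // gtnNdvd //; lia.
Qed.

Lemma reflective_gensP n : reflect (generated A n) (T n).
Proof.
apply: (iffP idP); first exact: reflective_shape_generated.
elim=> [|x m Ax _]; last exact: reflective_shape_addl.
have g_gt0 : 0 < g by rewrite lt0n; apply: contraNneq a_ndvd_g => ->.
by rewrite /T reflective_shape_lt ?dvdn0.
Qed.

End ReflectiveGenerators.

Section ReflectiveSemigroup.

Variables (S : pred nat) (g a N : nat).
Hypotheses (S0 : S 0) (SD : forall x y, S x -> S y -> S (x + y)).
Hypotheses (S_ge_N : forall n, N <= n -> S n)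
  (gaps_N : count (fun i => ~~ S i) (iota 0 N) = g).
Hypotheses (a_gt0 : 0 < a) (Sa : S a) (S_lt_a : forall k, 0 < k < a -> ~~ S k).
Hypotheses (g_gt0 : 0 < g) (S_refl : reflective S g).

Lemma S_muln x k : S x -> S (x * k).
Proof. by move=> Sx; elim: k => [|k IH]; rewrite ?muln0 // mulnS SD. Qed.

Lemma gap_genus : ~~ S g.
Proof. by move: (S_refl g_gt0); rewrite add0n S0. Qed.

Lemma multiplicity_gt1 : 1 < a.
Proof.
rewrite ltn_neqAle a_gt0 andbT eq_sym; apply: contraNneq gap_genus => a1.
by rewrite -[g]mul1n -a1 S_muln.
Qed.

Lemma multiplicity_ndvd_genus : ~~ (a %| g).
Proof. by apply: contraNN gap_genus => /divnK <-; rewrite mulnC S_muln. Qed.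

Lemma count_gaps_2genus : count (fun i => ~~ S i) (iota 0 (2 * g)) = g.
Proof.
have gaps_pairs m : m <= g ->
    count (fun i => ~~ S i) (iota 0 m) + count (fun i => ~~ S i) (iota g m) = m.
  elim: m => [|m IH] // mg.
  rewrite -addn1 !iotaD !count_cat /= !addn0 add0n addnACA IH 1?ltnW //.
  by move: (S_refl mg); rewrite addnC; case: (S m); case: (S (g + m)).
by rewrite mul2n -addnn iotaD count_cat gaps_pairs.
Qed.

Lemma S_ge_2genus n : 2 * g <= n -> S n.
Proof.
move=> g2n; apply/negPn/negP => Sn.
have [/S_ge_N | nN] := leqP N n; first by rewrite (negbTE Sn).
have gap_n : has (fun i => ~~ S i) (iota (2 * g) (N - 2 * g)).
  by apply/hasP; exists n => //; rewrite mem_iota; lia.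
move: gaps_N; rewrite -(subnKC (leq_trans g2n (ltnW nN))) iotaD count_cat.
by rewrite count_gaps_2genus add0n; move: gap_n; rewrite has_count; lia.
Qed.

Lemma multiplicity_le_genus : a <= g.+1.
Proof.
rewrite leqNgt; apply/negP => g1a.
have [g_gt1 | g1] := ltnP 1 g.
  have /negbTE S1 : ~~ S 1 by apply: S_lt_a; lia.
  have /negbTE S1g : ~~ S (1 + g) by apply: S_lt_a; lia.
  by move: (S_refl g_gt1); rewrite S1 S1g.
have /negP S2 : ~~ S 2 by apply: S_lt_a; lia.
by apply: S2; apply: S_ge_2genus; lia.
Qed.

Lemma S_lt_genus n : n < g -> S n = (a %| n).
Proof.
elim/ltn_ind: n => n IH ng; apply/idP/idP => [Sn | /divnK <-]; last first.
  by rewrite mulnC S_muln.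
have [na | an] := ltnP n a.
  case: n {IH ng} Sn na => [|n] Sn na; first by rewrite dvdn0.
  have nSn : ~~ S n.+1 by apply: S_lt_a.
  by rewrite Sn in nSn.
have S_na : S (n - a).
  have nag : n - a < g by lia.
  apply/negPn/negP => S_na.
  have S_nag : S (n - a + g) by move: (S_refl nag); rewrite (negbTE S_na).
  have := SD S_nag Sa; rewrite addnAC subnK // => S_ng.
  by move: (S_refl ng); rewrite Sn S_ng.
by rewrite -(subnK an) dvdn_add ?dvdnn // -IH //; lia.
Qed.

Lemma S_reflective_shape : S =1 reflective_shape g a.
Proof.
move=> n; have [ng | gn] := ltnP n g; first by rewrite reflective_shape_lt ?S_lt_genus.
have [n2g | g2n] := ltnP n (2 * g); last by rewrite S_ge_2genus ?reflective_shape_ge.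
rewrite reflective_shape_mid ?gn // -S_lt_genus; last by lia.
have ngg : n - g < g by lia.
by move: (S_refl ngg); rewrite subnK //; case: (S n); case: (S (n - g)).
Qed.

Lemma reflective_semigroup_structure :
  [/\ 2 <= a <= g.+1, ~~ (a %| g) & S =1 reflective_shape g a].
Proof.
by rewrite multiplicity_gt1 multiplicity_le_genus multiplicity_ndvd_genus;
  split=> //; apply: S_reflective_shape.
Qed.

End ReflectiveSemigroup.

Theorem mainTheorem1 (S : pred nat) (g a : nat) :
  numerical_semigroup S -> has_genus S g -> 1 <= g -> has_multiplicity S a ->
  let q := g %/ a in
  let r := g - a * q in
  reflective S g <->
  [/\ 2 <= a <= g.+1, ~~ (a %| g) &
      forall n, S n <->
        generated (a :: (2 * g + a - r) :: [seq g + i | i <- iota 1 (a - 1)]) n].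
Proof.
move=> [S0 SD _] [N [S_ge_N gaps_N]] g_gt0 [a_gt0 Sa S_lt_a] q r.
have -> : r = g %% a by rewrite /r /q {1}(divn_eq g a) mulnC addKn.
rewrite -/(reflective_gens g a); split => [S_refl | [a_range a_ndvd_g S_gen]].
  have [a_range a_ndvd_g S_shape] :=
    reflective_semigroup_structure S0 SD S_ge_N gaps_N a_gt0 Sa S_lt_a g_gt0 S_refl.
  by split=> // n; rewrite S_shape; split=> /(reflective_gensP a_range a_ndvd_g).
have genP := reflective_gensP a_range a_ndvd_g.
have S_shape n : S n = reflective_shape g a n.
  by apply/idP/idP => [/S_gen/genP | /genP/S_gen].
by move=> z zg; rewrite !S_shape; apply: reflective_shape_reflective.
Qed.
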